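(* Let $(G;+,\cdot)$ be a finite field of order $q$. If $n > \max(q,3)$ and $f \colon G^n \to G$ is not affine, then there exists a 2-element subset $I \subseteq \{1,\dots,n\}$ such that the identification minor $f_I$ is not affine.
   Context: A function $f\colon G^n\to G$ is affine over the field if $f(x_1,\dots,x_n) = a_1x_1+\dots+a_nx_n+c$ for some $a_i,c\in G$. Identification minor: for $I=\{i,j\}$, $i<j$, $f_I\colon G^{n-1}\to G$ is $f_I(x_1,\dots,x_{n-1}) = f(x_1,\dots,x_{j-1},x_i,x_j,\dots,x_{n-1})$ (the $i$-th and $j$-th arguments of $f$ are identified). *)

From HB Require Import structures.
From mathcomp Require Import all_boot all_order all_algebra all_fingroup all_field.
Set Implicit Arguments. Unset Strict Implicit. Unset Printing Implicit Defensive.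
Import GRing.Theory.
Local Open Scope ring_scope.

Definition affine (G : fieldType) (n : nat) (f : ('I_n -> G) -> G) : Prop :=
  exists (a : 'I_n -> G) (c : G), forall x : 'I_n -> G,
    f x = \sum_(k < n) a k * x k + c.

(* Identification minor f_I for I = {i, j}, i < j (0-based indices in 'I_m.+2;
   arity n = m.+2 >= 2 so that the (n-1)-ary minor has index type 'I_m.+1
   and inord is available).
   f_I(y_0,...,y_{m-1}) = f(y_0,...,y_{j-1}, y_i, y_j, ..., y_{m-1}). *)

Definition ident_minor (G : Type) (m : nat) (f : ('I_m.+2 -> G) -> G)
  (i j : 'I_m.+2) : ('I_m.+1 -> G) -> G :=
  fun y => f (fun k => if (k < j)%N then y (inord k)
                   else if (k == j :> nat) then y (inord i)
                   else y (inord k.-1)).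

(* Call f "affine on" a subspace P of G^n when
     f (u + t v) = f u + t (f v - f 0)   for all u, v in P and t in G.
   Being affine on all of G^n is equivalent to being affine; an affine
   identification minor f_{ij} makes f affine on the diagonal hyperplane
   D_ij = {x | x_i = x_j}, because f agrees there with f_{ij} composed with
   a linear contraction G^n -> G^(n-1).
   Assume now that every f_{ij} is affine.  Composing f with the linear
   projection onto D_01 gives a function L that is affine everywhere and
   agrees with f on D_01; hence g = f - L vanishes on D_01 and is affine on
   every D_ij.  Such a g is a multiple of x_0 - x_1: a point x of D_ij is
   moved into D_01 along a vector d with d_0 = 1, d_1 = 0 lying in D_ij, and
   n >= 4 provides two further coordinates to see that g d does not depend
   on d.  Finally, as n > q, every x has two equal coordinates (pigeonhole),
   so g is linear on all of G^n and f = L + g is affine. *)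

From HB Require Import structures.
From mathcomp Require Import all_boot all_order all_algebra all_fingroup all_field.
From mathcomp Require Import ring zify.
From Stdlib Require Import Classical FunctionalExtensionality.
Set Implicit Arguments. Unset Strict Implicit. Unset Printing Implicit Defensive.
Import GRing.Theory.
Local Open Scope ring_scope.

Section AffineOn.
Variables (G : fieldType) (n : nat).
Implicit Types (f h : ('I_n -> G) -> G) (u v x : 'I_n -> G)
  (P Q : ('I_n -> G) -> Prop).

Definition affine_on P f : Prop :=
  forall u v (t : G), P u -> P v ->
    f (fun k => u k + t * v k) = f u + t * (f v - f (fun=> 0)).

Definition whole : ('I_n -> G) -> Prop := fun=> True.

Definition diag (i j : 'I_n) x : Prop := x i = x j.

Lemma affine_on_affine P f : affine f -> affine_on P f.
Proof.
move=> [a [c fE]] u v t _ _; rewrite !fE.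
rewrite [X in _ - (X + c)]big1; last by move=> k _; rewrite mulr0.
rewrite (eq_bigr (fun k => a k * u k + t * (a k * v k))); last by move=> k _; ring.
by rewrite big_split /= -mulr_sumr; ring.
Qed.

Lemma affine_on_sub P f h :
  affine_on P f -> affine_on P h -> affine_on P (fun x => f x - h x).
Proof. by move=> Af Ah u v t Pu Pv; rewrite Af // Ah //; ring. Qed.

Lemma affine_on_weaken P Q f :
  (forall x, Q x -> P x) -> affine_on P f -> affine_on Q f.
Proof. by move=> QP Af u v t Qu Qv; apply: Af; apply: QP. Qed.

(* The standard basis vector at o, and the truncation of x to its first r
   coordinates; adding coordinates one at a time rebuilds x. *)
Definition unit_vec (o : 'I_n) : 'I_n -> G := fun k => if k == o then 1 else 0.
Definition trunc x (r : nat) : 'I_n -> G := fun k => if (k < r)%N then x k else 0.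

Lemma trunc_succ x r (hr : (r < n)%N) :
  trunc x r.+1 = fun k => trunc x r k + x (Ordinal hr) * unit_vec (Ordinal hr) k.
Proof.
apply: functional_extensionality => k; rewrite /trunc /unit_vec.
case: (ltngtP k r) => hkr.
- have /negbTE -> : k != Ordinal hr by rewrite -val_eqE /=; lia.
  by rewrite ifT ?mulr0 ?addr0 //; lia.
- have /negbTE -> : k != Ordinal hr by rewrite -val_eqE /=; lia.
  by rewrite ifF ?mulr0 ?addr0 //; lia.
- have -> : k == Ordinal hr by rewrite -val_eqE /= hkr.
  by rewrite hkr ltnSn mulr1 add0r; congr x; apply: val_inj.
Qed.

Lemma affine_whole f : affine_on whole f -> affine f.
Proof.
move=> Af; set f0 := f (fun=> 0).
exists (fun o => f (unit_vec o) - f0), f0 => x.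
suff fE r : f (trunc x r) = \sum_(k < n) (f (unit_vec k) - f0) * trunc x r k + f0.
  have -> : x = trunc x n.
    by apply: functional_extensionality => k; rewrite /trunc ltn_ord.
  exact: fE.
elim: r => [|r IH].
  rewrite big1 ?add0r; last by move=> k _; rewrite /trunc ltn0 mulr0.
  by congr f; apply: functional_extensionality => k; rewrite /trunc ltn0.
have [hr | hr] := ltnP r n; last first.
  have -> : trunc x r.+1 = trunc x r.
    apply: functional_extensionality => k; rewrite /trunc.
    by rewrite !ifT //; move: (ltn_ord k); lia.
  exact: IH.
rewrite trunc_succ Af // IH; set o := Ordinal hr.
rewrite [in RHS](eq_bigr (fun k => (f (unit_vec k) - f0) * trunc x r k
                  + (f (unit_vec k) - f0) * (x o * unit_vec o k))); last first.
  by move=> k _; ring.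
have pick : \sum_(k < n) (f (unit_vec k) - f0) * (x o * unit_vec o k)
              = (f (unit_vec o) - f0) * x o.
  rewrite (bigD1 o) //= big1 ?addr0; first by rewrite /unit_vec eqxx mulr1.
  by move=> k /negbTE neq; rewrite /unit_vec neq !mulr0.
by rewrite big_split /= pick -/f0; ring.
Qed.

Definition proj_diag (i j : 'I_n) x : 'I_n -> G :=
  fun k => if k == j then x i else x k.

Lemma proj_diag_id i j x : diag i j x -> proj_diag i j x = x.
Proof.
by move=> Dx; apply: functional_extensionality => k; rewrite /proj_diag; case: eqP => [->|].
Qed.

Lemma affine_on_proj_diag i j f :
  i != j -> affine_on (diag i j) f -> affine_on whole (fun x => f (proj_diag i j x)).
Proof.
move=> /negbTE nij Af u v t _ _.
have Dproj x : diag i j (proj_diag i j x) by rewrite /diag /proj_diag eqxx nij.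
have -> : proj_diag i j (fun k => u k + t * v k)
          = fun k => proj_diag i j u k + t * proj_diag i j v k.
  by apply: functional_extensionality => k; rewrite /proj_diag; case: eqP.
rewrite Af //; congr (_ + _ * (_ - f _)).
by apply: functional_extensionality => k; rewrite /proj_diag; case: eqP.
Qed.

End AffineOn.

Arguments whole {G n} _.
Arguments unit_vec {G n} o _.

Lemma pigeonhole (T : finType) n (x : 'I_n -> T) :
  (#|T| < n)%N -> exists i j : 'I_n, (i < j)%N /\ x i = x j.
Proof.
move=> hn; apply: NNPP => noeq.
have xinj : injective x.
  move=> i j xij; apply/val_inj/eqP; case: (ltngtP i j) => // hij; exfalso; apply: noeq.
  - by exists i, j.
  - by exists j, i.
by move: (leq_card x xinj); rewrite card_ord leqNgt hn.
Qed.

Section Minors.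
Variables (G : fieldType) (m : nat) (f : ('I_m.+2 -> G) -> G).

(* Deleting coordinate j: the linear map G^(m+2) -> G^(m+1) inverse to the
   duplication performed by an identification minor on the diagonal. *)
Definition contract (j : 'I_m.+2) (z : 'I_m.+2 -> G) : 'I_m.+1 -> G :=
  fun k => z (if (k < j)%N then inord k else inord k.+1).

Lemma minor_contract (i j : 'I_m.+2) z :
  (i < j)%N -> diag i j z -> ident_minor f i j (contract j z) = f z.
Proof.
move=> hij Dz; rewrite /ident_minor /contract; congr f.
apply: functional_extensionality => k; move: (ltn_ord k) (ltn_ord j) => hk hj.
case: (ltngtP k j) => hkj.
- rewrite inordK; last by lia.
  by rewrite ifT; [congr z; apply: val_inj; rewrite /= inordK //; lia | lia].
- rewrite inordK; last by lia.
  by rewrite ifF; [congr z; apply: val_inj; rewrite /= inordK //; lia | lia].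
- rewrite inordK; last by lia.
  by rewrite ifT ?inord_val ?Dz; [congr z; apply: val_inj | lia].
Qed.

Lemma affine_on_diag_of_minor (i j : 'I_m.+2) :
  (i < j)%N -> affine (ident_minor f i j) -> affine_on (diag i j) f.
Proof.
move=> hij Aminor u v t Du Dv.
have Dcomb : diag i j (fun k => u k + t * v k) by rewrite /diag Du Dv.
have D0 : diag i j (fun=> 0 : G) by [].
rewrite -!(minor_contract (i:=i) (j:=j)) //.
exact (@affine_on_affine _ _ whole _ Aminor (contract j u) (contract j v) t I I).
Qed.

End Minors.

Lemma ord_neq n (a b : 'I_n) : (a : nat) <> b -> (a == b) = false.
Proof. by move=> neq; apply/eqP => /(congr1 val). Qed.

Section VanishingOnDiagonal.
Variables (G : fieldType) (n : nat) (g : ('I_n.+4 -> G) -> G).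
Local Notation o0 := (inord 0 : 'I_n.+4).
Local Notation o1 := (inord 1 : 'I_n.+4).
Local Notation o2 := (inord 2 : 'I_n.+4).
Local Notation o3 := (inord 3 : 'I_n.+4).
Hypothesis g_diag : forall i j : 'I_n.+4, (i < j)%N -> affine_on (diag i j) g.
Hypothesis g_vanish : forall x, diag o0 o1 x -> g x = 0.

Lemma val_o0 : (o0 : nat) = 0%N. Proof. by rewrite /= inordK. Qed.
Lemma val_o1 : (o1 : nat) = 1%N. Proof. by rewrite /= inordK. Qed.
Lemma val_o2 : (o2 : nat) = 2%N. Proof. by rewrite /= inordK. Qed.
Lemma val_o3 : (o3 : nat) = 3%N. Proof. by rewrite /= inordK. Qed.

Lemma separating_vector (i j : 'I_n.+4) :
  (i < j)%N -> ~ ((i : nat) = 0%N /\ (j : nat) = 1%N) ->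
  exists d : 'I_n.+4 -> G, [/\ d o0 = 1, d o1 = 0, diag o2 o3 d & diag i j d].
Proof.
move=> hij not01; have [i_pos | i0] := ltnP 0 i.
- exists (unit_vec o0).
  by rewrite /diag /unit_vec eqxx !ord_neq ?val_o0 ?val_o1 ?val_o2 ?val_o3 //=; lia.
- exists (fun k => if k == o1 then 0 else 1).
  by rewrite /diag eqxx !ord_neq ?val_o0 ?val_o1 ?val_o2 ?val_o3 //=; lia.
Qed.

Lemma g_zero : g (fun=> 0) = 0. Proof. exact: g_vanish. Qed.

Lemma g_direction d :
  d o0 = 1 -> d o1 = 0 -> diag o2 o3 d -> g d = g (unit_vec o0).
Proof.
move=> d0 d1 d23.
have e23 : diag o2 o3 (unit_vec o0 : 'I_n.+4 -> G).
  by rewrite /diag /unit_vec !ord_neq // ?val_o0 ?val_o2 ?val_o3.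
have -> : d = fun k => (d k - unit_vec o0 k) + 1 * unit_vec o0 k.
  by apply: functional_extensionality => k; rewrite mul1r subrK.
rewrite (g_diag (i:=o2) (j:=o3)) ?val_o2 ?val_o3 //; last first.
  by rewrite /diag d23 e23.
rewrite g_vanish ?g_zero; last first.
  by rewrite /diag d0 d1 /unit_vec eqxx ord_neq ?val_o0 ?val_o1 // subrr subr0.
by ring.
Qed.

Lemma g_on_diag (i j : 'I_n.+4) x :
  (i < j)%N -> diag i j x -> g x = g (unit_vec o0) * (x o0 - x o1).
Proof.
move=> hij.
have [[i0 j1] | not01] := classic ((i : nat) = 0%N /\ (j : nat) = 1%N).
  have [-> ->] : i = o0 /\ j = o1 by split; apply: ord_inj; rewrite ?val_o0 ?val_o1.
  by move=> Dx; rewrite g_vanish // Dx subrr mulr0.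
move=> Dx.
have [d [d0 d1 d23 dij]] := separating_vector hij not01.
set t := x o0 - x o1; set x' := fun k => x k - t * d k.
have -> : x = fun k => x' k + t * d k.
  by apply: functional_extensionality => k; rewrite /x' subrK.
have x'01 : diag o0 o1 x' by rewrite /diag /x' d0 d1 /t; ring.
have x'ij : diag i j x' by rewrite /diag /x' Dx dij.
by rewrite (g_diag hij) // (g_direction d0 d1 d23) (g_vanish x'01) g_zero; ring.
Qed.

End VanishingOnDiagonal.

(* n = m.+2 is the arity; n > max(q,3) forces n >= 4, so this is no restriction. *)
Theorem mainTheorem13 (G : finFieldType) (m : nat)
  (Hn : (maxn #|G| 3 < m.+2)%N) (f : ('I_m.+2 -> G) -> G) :
  ~ affine f ->
  exists i j : 'I_m.+2, (i < j)%N /\ ~ affine (ident_minor f i j).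
Proof.
move=> not_affine; apply: NNPP => all_minors_affine; apply: not_affine.
move: Hn; rewrite gtn_max => /andP[hq].
case: m f all_minors_affine hq => [|[|n]] // f minors hq _.
have f_diag (i j : 'I_n.+4) : (i < j)%N -> affine_on (diag i j) f.
  move=> hij; apply: (affine_on_diag_of_minor hij); apply: NNPP => not_aff.
  by apply: minors; exists i, j.
set o0 : 'I_n.+4 := inord 0; set o1 : 'I_n.+4 := inord 1.
set L := fun x => f (proj_diag o0 o1 x).
have L_whole : affine_on whole L.
  apply: affine_on_proj_diag; first by rewrite ord_neq // /o0 /o1 val_o0 val_o1.
  by apply: f_diag; rewrite /o0 /o1 val_o0 val_o1.
set g := fun x => f x - L x.
have g_diag (i j : 'I_n.+4) : (i < j)%N -> affine_on (diag i j) g.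
  move=> hij; apply: affine_on_sub; first exact: f_diag.
  exact: affine_on_weaken L_whole.
have g_vanish x : diag o0 o1 x -> g x = 0 by move=> Dx; rewrite /g /L proj_diag_id ?subrr.
set lam := g (unit_vec o0).
have g_lin x : g x = lam * (x o0 - x o1).
  by have [i [j [hij Dx]]] := pigeonhole x hq; exact: g_on_diag Dx.
apply: affine_whole => u v t _ _.
have fE x : f x = L x + lam * (x o0 - x o1) by rewrite -g_lin /g; ring.
by rewrite !fE L_whole //; ring.
Qed.
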